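(* Let $T$ be a tournament of order $n \geq 3$. Then $\mathrm{sinv}_1(T) = \mathrm{sinv}'_1(T) = 0$ if $T$ is strong and $\mathrm{sinv}_1(T) = \mathrm{sinv}'_1(T) = 1$ otherwise. In particular, $m_1(n) = m'_1(n) = 1$ for all $n \geq 3$ and $M_1 = M'_1 = 1$.
   Context: A tournament is an orientation of a complete graph; it is strong if for every ordered pair of vertices $(u,v)$ there is a directed path from $u$ to $v$. For a digraph $D$ and $X \subseteq V(D)$, inverting $X$ means reversing the direction of every arc of $D$ with both endvertices in $X$. A digraph $D$ is $k$-arc-strong if for every partition $(V_1,V_2)$ of $V(D)$ into nonempty sets there are at least $k$ arcs from $V_1$ to $V_2$; it is $k$-strong if $|V(D)|\ge k+1$ and $D-S$ is strong for every $S\subseteq V(D)$ with $|S|<k$. $\mathrm{sinv}'_k(D)$ (resp. $\mathrm{sinv}_k(D)$) is the minimum number of sets whose successive inversion transforms $D$ into a $k$-arc-strong (resp. $k$-strong) digraph. For $n\ge 2k+1$, $m_k(n)=\max\{\mathrm{sinv}_k(T): T \text{ tournament of order } n\}$, $m'_k(n)=\max\{\mathrm{sinv}'_k(T): T \text{ tournament of order } n\}$, $M_k=\max\{\mathrm{sinv}_k(T): T \text{ tournament of order at least } 2k+1\}$, $M'_k=\max\{\mathrm{sinv}'_k(T): T \text{ tournament of order at least } 2k+1\}$. *)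

From mathcomp Require Import all_boot.
Set Implicit Arguments. Unset Strict Implicit. Unset Printing Implicit Defensive.

Section Digraphs.
Variable T : finType.

Definition tournament (D : rel T) : Prop :=
  (forall x, ~~ D x x) /\ (forall x y, x != y -> D x y (+) D y x).

Definition invert (D : rel T) (X : {set T}) : rel T :=
  fun x y => if (x \in X) && (y \in X) then D y x else D x y.

Definition invert_seq (D : rel T) (Xs : seq {set T}) : rel T :=
  foldl invert D Xs.

Definition strong (D : rel T) : Prop := forall u v, connect D u v.

Definition arc_strong (k : nat) (D : rel T) : Prop :=
  forall V1 : {set T}, V1 != set0 -> V1 != setT ->
    k <= #|[set p : T * T | [&& p.1 \in V1, p.2 \notin V1 & D p.1 p.2]]|.

Definition strong_minus (D : rel T) (S : {set T}) : Prop :=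
  forall u v, u \notin S -> v \notin S ->
    connect [rel x y | [&& D x y, x \notin S & y \notin S]] u v.

Definition vertex_strong (k : nat) (D : rel T) : Prop :=
  k.+1 <= #|T| /\ forall S : {set T}, #|S| < k -> strong_minus D S.

Definition sinv_is (P : rel T -> Prop) (D : rel T) (m : nat) : Prop :=
  (exists Xs : seq {set T}, size Xs = m /\ P (invert_seq D Xs)) /\
  (forall Xs : seq {set T}, P (invert_seq D Xs) -> m <= size Xs).

End Digraphs.

Definition sinv (k : nat) (T : finType) (D : rel T) (m : nat) : Prop :=
  sinv_is (vertex_strong k) D m.
Definition sinv' (k : nat) (T : finType) (D : rel T) (m : nat) : Prop :=
  sinv_is (arc_strong k) D m.

(* v is the maximum of sinv_k (resp. sinv'_k) over tournaments of order n
   (vertex set 'I_n, i.e. up to isomorphism). *)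
Definition m_is (s : nat -> forall T : finType, rel T -> nat -> Prop)
    (k n v : nat) : Prop :=
  (exists D : rel 'I_n, tournament D /\ s k _ D v) /\
  (forall (D : rel 'I_n) (w : nat), tournament D -> s k _ D w -> w <= v).

Definition M_is (s : nat -> forall T : finType, rel T -> nat -> Prop)
    (k v : nat) : Prop :=
  (exists n (D : rel 'I_n), (2 * k).+1 <= n /\ tournament D /\ s k _ D v) /\
  (forall n (D : rel 'I_n) (w : nat), (2 * k).+1 <= n ->
      tournament D -> s k _ D w -> w <= v).

From mathcomp Require Import all_boot.
Set Implicit Arguments. Unset Strict Implicit. Unset Printing Implicit Defensive.

(* For k = 1, being 1-strong and being 1-arc-strong both mean being strong, so
   sinv_1 and sinv'_1 vanish exactly on strong tournaments.  Every tournament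
   has a Hamiltonian path x ... z: merge sort needs a total comparison, not a
   transitive one.  If the tournament is not strong, the arc between the ends
   is x -> z, since otherwise the path closes into a Hamiltonian cycle.  When
   n >= 3 no arc of the path joins x and z, so inverting {x, z} reverses only
   the arc x -> z and closes the path into a Hamiltonian cycle.  The transitive
   tournament is not strong, so all the maxima equal 1. *)

Section Strong.
Variable T : finType.

Definition strongb (D : rel T) := [forall u, forall v, connect D u v].

Lemma strongP (D : rel T) : reflect (strong D) (strongb D).
Proof.
apply: (iffP forallP) => [Dc u v | Ds u]; last by apply/forallP.
by have /forallP := Dc u.
Qed.

Lemma connect_forward_closed (e : rel T) (P : pred T) :
  (forall x y, P x -> e x y -> P y) ->
  forall x y, P x -> connect e x y -> P y.
Proof.
move=> eP x y Px /connectP[p + ->]; elim: p x Px => //= z p IHp x Px.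
by case/andP=> /(eP _ _ Px) Pz; apply: IHp.
Qed.

Lemma cycle_cover_strong (D : rel T) (s : seq T) :
  cycle D s -> (forall v, v \in s) -> strong D.
Proof. by move=> Ds sT u v; apply: (connect_cycle Ds). Qed.

Lemma strong_minus_set0 (D : rel T) : strong_minus D set0 <-> strong D.
Proof.
have eD : [rel x y | [&& D x y, x \notin set0 & y \notin set0]] =2 D.
  by move=> x y /=; rewrite !inE !andbT.
split=> Ds u v *; first by rewrite -(eq_connect eD) Ds ?inE.
by rewrite (eq_connect eD).
Qed.

Lemma vertex_strong1P (D : rel T) :
  2 <= #|T| -> vertex_strong 1 D <-> strong D.
Proof.
move=> T2; split=> [[_ DS] | Ds].
  by apply/strong_minus_set0/DS; rewrite cards0.
by split=> // S; rewrite ltnS leqn0 => /eqP/cards0_eq ->; apply/strong_minus_set0.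
Qed.

Lemma arc_strong1P (D : rel T) : arc_strong 1 D <-> strong D.
Proof.
split=> [Da u v | Ds V1 /set0Pn[u uV1] V1T].
- apply/negPn/negP => uv; set V1 := [set x | connect D u x].
  have /card_gt0P[[x y]] : 0 < #|[set p : T * T |
      [&& p.1 \in V1, p.2 \notin V1 & D p.1 p.2]]|.
    apply: Da; first by apply/set0Pn; exists u; rewrite inE.
    by apply/eqP => /setP/(_ v); rewrite !inE (negbTE uv).
  rewrite !inE /= => /and3P[ux uy Dxy]; case/negP: uy.
  exact: connect_trans ux (connect1 Dxy).
- have [v vV1] : exists v, v \notin V1.
    apply/existsP; apply: contraR V1T => /existsPn V1v.
    by apply/eqP/setP => x; rewrite inE; apply/negPn.
  rewrite lt0n; apply: contra vV1 => /eqP/cards0_eq cut0.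
  apply: (connect_forward_closed (P := fun w => w \in V1) _ uV1 (Ds u v)).
  move=> x y xV1 Dxy; apply: contraT => yV1.
  by move/setP: cut0 => /(_ (x, y)); rewrite !inE /= xV1 yV1 Dxy.
Qed.

End Strong.

Lemma uniq_path_reflexive_closure (T : eqType) (e : rel T) x s :
  uniq (x :: s) -> path [rel a b | (a == b) || e a b] x s -> path e x s.
Proof.
elim: s x => //= y s IHs x /andP[+ ys] /andP[+ ps].
rewrite inE negb_or => /andP[/negbTE-> _] /= -> /=; exact: IHs.
Qed.

Section Inversions.
Variables (T : finType) (P : rel T -> Prop).

Lemma sinv_is_unique D m w : sinv_is P D m -> sinv_is P D w -> m = w.
Proof.
move=> [[Xm [<- Pm]] m_min] [[Xw [<- Pw]] w_min].
by apply/eqP; rewrite eqn_leq m_min // w_min.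
Qed.

Lemma sinv_is0 D : P D -> sinv_is P D 0.
Proof. by split=> //; exists [::]. Qed.

Lemma sinv_is1 D X : ~ P D -> P (invert D X) -> sinv_is P D 1.
Proof. by move=> nPD PDX; split=> [|[]//]; exists [:: X]. Qed.

End Inversions.

Section Tournament.
Variables (T : finType) (D : rel T).

Lemma invert_ends_cycle x s :
  uniq (x :: s) -> 2 <= size s -> path D x s -> D x (last x s) ->
  cycle (invert D [set x; last x s]) (x :: s).
Proof.
case: s => [|y t] //=; rewrite inE negb_or.
move=> /andP[/andP[xy xt] /andP[yt _]] t1 /andP[Dxy Dyt] Dxz.
have zt : last y t \in t by case: t t1 {xt yt Dyt Dxz} => //= a t _; apply: mem_last.
set z := last y t in zt Dxz *; set X := [set x; z].
have xX : x \in X by rewrite !inE eqxx.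
have zX : z \in X by rewrite !inE eqxx orbT.
have yX : y \notin X.
  by rewrite !inE negb_or eq_sym xy; apply: contraNneq yt => ->.
have off_x : {in predC1 x &, invert D X =2 D}.
  move=> a b /[!inE] /negbTE ax /negbTE bx.
  by rewrite /invert !inE ax bx /=; do 2!case: eqP => [-> | //].
rewrite rcons_path (eq_in_path off_x) ?Dyt /=; last first.
  by rewrite eq_sym xy; apply/allP => a at_; apply: contraNneq xt => <-.
by rewrite /invert -/z xX zX (negbTE yX) Dxy Dxz.
Qed.

Hypothesis tD : tournament D.

Lemma tournament_hamiltonian_path :
  exists s, [/\ uniq s, forall v, v \in s & sorted D s].
Proof.
set D' := [rel a b | (a == b) || D a b].
have D'_total : total D'.
  move=> a b /=; case: (eqVneq a b) => // ab.
  by have := proj2 tD a b ab; case: (D a b) => //= ->.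
have sort_enum : perm_eq (sort D' (enum T)) (enum T) by rewrite perm_sort.
have uniq_sort : uniq (sort D' (enum T)) by rewrite (perm_uniq sort_enum) enum_uniq.
exists (sort D' (enum T)); split=> // [v | ].
  by rewrite (perm_mem sort_enum) mem_enum.
move: uniq_sort (sort_sorted D'_total (enum T)).
by case: (sort _ _) => //= x s; apply: uniq_path_reflexive_closure.
Qed.

Lemma nonstrong_path_ends x s :
  uniq (x :: s) -> (forall v, v \in x :: s) -> 1 <= size s -> path D x s ->
  ~ strong D -> D x (last x s).
Proof.
move=> uxs sT s1 Dxs nDs.
have xz : x != last x s.
  case: s s1 uxs {sT Dxs} => //= y s _ /andP[+ _].
  by apply: contraNneq => ->; apply: mem_last.
have := proj2 tD x _ xz; case: (D x _) => //= Dzx.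
by case: nDs; apply: (cycle_cover_strong _ sT); rewrite /= rcons_path Dxs Dzx.
Qed.

Lemma tournament_invert_strong :
  3 <= #|T| -> ~ strong D -> exists X, strong (invert D X).
Proof.
move=> T3 nDs; have [[|x s] [us sT Ds]] := tournament_hamiltonian_path.
  by have := sT (enum_default (Ordinal T3)).
have s2 : 2 <= size s.
  have := uniq_leq_size (enum_uniq T) (fun v _ => sT v).
  by rewrite -cardT => Ts; apply: leq_trans T3 Ts.
exists [set x; last x s]; apply: (cycle_cover_strong _ sT).
exact: invert_ends_cycle us s2 Ds (nonstrong_path_ends us sT (ltnW s2) Ds nDs).
Qed.

End Tournament.

Section FirstLevel.
Variables (T : finType) (D : rel T).
Hypotheses (T3 : 3 <= #|T|) (tD : tournament D).

Lemma tournament_sinv_is (P : rel T -> Prop) :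
  (forall E, P E <-> strong E) -> sinv_is P D (~~ strongb D).
Proof.
move=> PE; case: strongP => [Ds | nDs]; first by apply/sinv_is0/PE.
have [X DXs] := tournament_invert_strong tD T3 nDs.
by apply: (sinv_is1 (X := X)); [move/PE | apply/PE].
Qed.

Lemma tournament_sinv1 : sinv 1 D (~~ strongb D) /\ sinv' 1 D (~~ strongb D).
Proof.
split; apply: tournament_sinv_is => E; first exact/vertex_strong1P/ltnW.
exact: arc_strong1P.
Qed.

End FirstLevel.

Definition transitive_tournament n : rel 'I_n := [rel i j : 'I_n | i < j].
Arguments transitive_tournament : clear implicits.

Lemma transitive_tournamentP n : tournament (transitive_tournament n).
Proof.
rewrite /transitive_tournament; split=> [i | i j] /=; first by rewrite ltnn.
by rewrite -val_eqE /=; case: ltngtP.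
Qed.

Lemma transitive_tournament_connect n (i j : 'I_n) :
  connect (transitive_tournament n) i j -> i <= j.
Proof.
apply: (connect_forward_closed (P := fun k : 'I_n => i <= k)) => // a b ia ab.
exact: ltnW (leq_ltn_trans ia ab).
Qed.

Lemma transitive_tournament_nonstrong n :
  2 <= n -> ~ strong (transitive_tournament n).
Proof.
by move=> n2 /(_ (Ordinal n2) (Ordinal (ltnW n2)))/transitive_tournament_connect.
Qed.

Section Maxima.
Variable s : nat -> forall T : finType, rel T -> nat -> Prop.
Hypothesis s_tournament :
  forall (T : finType) (D : rel T), 3 <= #|T| -> tournament D -> s 1 D (~~ strongb D).
Hypothesis s_functional :
  forall (T : finType) (D : rel T) v w, s 1 D v -> s 1 D w -> v = w.

Lemma tournament_value_le1 (T : finType) (D : rel T) w :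
  3 <= #|T| -> tournament D -> s 1 D w -> w <= 1.
Proof. by move=> T3 tD /(s_functional (s_tournament T3 tD)) <-; apply: leq_b1. Qed.

Lemma transitive_tournament_value n :
  3 <= n -> s 1 (transitive_tournament n) 1.
Proof.
move=> n3; have T3 : 3 <= #|'I_n| by rewrite card_ord.
have := s_tournament T3 (transitive_tournamentP n).
by case: strongP => // /(transitive_tournament_nonstrong (ltnW n3)).
Qed.

Lemma m_is_one n : 3 <= n -> m_is s 1 n 1.
Proof.
move=> n3; split=> [|D w]; last by apply: tournament_value_le1; rewrite card_ord.
exists (transitive_tournament n).
by split; [apply: transitive_tournamentP | apply: transitive_tournament_value].
Qed.

Lemma M_is_one : M_is s 1 1.
Proof.
split=> [|n D w n3]; last by apply: tournament_value_le1; rewrite card_ord.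
exists 3, (transitive_tournament 3); split=> //.
by split; [apply: transitive_tournamentP | apply: transitive_tournament_value].
Qed.

End Maxima.

Theorem proposition5p1 :
  (forall (T : finType) (D : rel T), 3 <= #|T| -> tournament D ->
     (strong D -> sinv 1 D 0 /\ sinv' 1 D 0) /\
     (~ strong D -> sinv 1 D 1 /\ sinv' 1 D 1)) /\
  (forall n : nat, 3 <= n -> m_is sinv 1 n 1 /\ m_is sinv' 1 n 1) /\
  M_is sinv 1 1 /\ M_is sinv' 1 1.
Proof.
have sinv_tour T D T3 tD := proj1 (@tournament_sinv1 T D T3 tD).
have sinv'_tour T D T3 tD := proj2 (@tournament_sinv1 T D T3 tD).
have sinv_fun T D := @sinv_is_unique T (vertex_strong 1) D.
have sinv'_fun T D := @sinv_is_unique T (arc_strong 1) D.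
split; first by move=> T D T3 tD; have := tournament_sinv1 T3 tD; case: strongP.
split=> [n n3 |]; split.
- exact: m_is_one sinv_tour sinv_fun n n3.
- exact: m_is_one sinv'_tour sinv'_fun n n3.
- exact: M_is_one sinv_tour sinv_fun.
- exact: M_is_one sinv'_tour sinv'_fun.
Qed.
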